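(* Let $(\Omega,\mathcal{F})$ be a measurable space and $\mathcal{P}=\{P_1,\dots,P_K\}$ a finite set of probability measures on it, with $\hat{\mathbb{E}}[Z]=\max_{1\le i\le K}E_{P_i}[Z]$. Let $X,Y$ be random variables with $\hat{\mathbb{E}}[X^2]+\hat{\mathbb{E}}[Y^2]<\infty$, and set $a_i=E_{P_i}[X]$, $b_i=E_{P_i}[Y]$, $c_i=C_{P_i}(X,Y)$ for $1\le i\le K$. For $1\le i\le j\le K$ define $$q_{ij}(x)=\begin{cases}\dfrac{1}{b_j-b_i}\Big((x-b_i)(x-b_j)(a_i-a_j)+(x-b_i)(c_j-c_i)\Big)+c_i, & a_i\ne a_j\text{ and }b_i\ne b_j,\\ c_i, & \text{otherwise},\end{cases}$$ and $$\tilde{\mu}_{ij}=\begin{cases}\left(\left(\dfrac{c_j-c_i}{2(a_j-a_i)}+\dfrac{b_i+b_j}{2}\right)\vee\underline{b}_{ij}\right)\wedge\overline{b}_{ij}, & a_i\ne a_j\text{ and }b_i\ne b_j,\\ b_i, & \text{otherwise},\end{cases}$$ where $\underline{b}_{ij}=b_i\wedge b_j$ and $\overline{b}_{ij}=b_i\vee b_j$. Then $$\overline{C}(X,Y)=\max\Big\{\max_{1\le i\le K}C_{P_i}(X,Y),\ \max_{1\le i\le j\le K}q_{ij}(\tilde{\mu}_{ij})\Big\}.$$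
   Context: For a random variable $W$ with $\hat{\mathbb{E}}[W^2]<\infty$: $\overline{\mu}_W=\hat{\mathbb{E}}[W]$, $\underline{\mu}_W=-\hat{\mathbb{E}}[-W]$, $M_W=[\underline{\mu}_W,\overline{\mu}_W]$. Upper covariance $\overline{C}(X,Y)=\max_{\mu_2\in M_Y}\min_{\mu_1\in M_X}\hat{\mathbb{E}}[(X-\mu_1)(Y-\mu_2)]$. For a probability measure $P$, $C_P(X,Y)=E_P[(X-E_P[X])(Y-E_P[Y])]$. $\vee$ and $\wedge$ denote max and min. *)

From HB Require Import structures.
From mathcomp Require Import all_boot all_order all_algebra.
From mathcomp Require Import all_classical all_reals all_analysis.
Set Implicit Arguments. Unset Strict Implicit. Unset Printing Implicit Defensive.
Import Order.TTheory GRing.Theory Num.Theory.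
Local Open Scope ring_scope.
Local Open Scope classical_set_scope.

Section defs.
Context {d : measure_display} {T : measurableType d} {R : realType} {K : nat}.
Variable P : 'I_K -> probability T R.

Definition Ehat (Z : T -> R) : \bar R :=
  (\big[Order.max/-oo]_(i < K) 'E_(P i)[Z])%E.

Definition Mset (W : T -> R) : set R :=
  [set r : R | (- Ehat (fun w => (- W w)%R) <= r%:E <= Ehat W)%E].

(* upper covariance  max_{mu2 in M_Y} min_{mu1 in M_X} \hat E[(X-mu1)(Y-mu2)],
   max/min rendered as sup/inf *)
Definition upper_cov (X Y : T -> R) : \bar R :=
  ereal_sup [set ereal_inf [set Ehat (fun w => (X w - m1) * (Y w - m2))
                             | m1 in Mset X] | m2 in Mset Y].

Section coeffs.
Variables X Y : T -> R.
Definition ca (i : 'I_K) : R := fine ('E_(P i)[X])%E.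
Definition cb (i : 'I_K) : R := fine ('E_(P i)[Y])%E.
Definition cc (i : 'I_K) : R := fine (covariance (P i) X Y).

Definition qfun (i j : 'I_K) (x : R) : R :=
  if (ca i != ca j) && (cb i != cb j) then
    ((x - cb i) * (x - cb j) * (ca i - ca j) + (x - cb i) * (cc j - cc i))
      / (cb j - cb i) + cc i
  else cc i.

Definition mutilde (i j : 'I_K) : R :=
  if (ca i != ca j) && (cb i != cb j) then
    Order.min (Order.max ((cc j - cc i) / (2 * (ca j - ca i)) + (cb i + cb j) / 2)
                         (Order.min (cb i) (cb j)))
              (Order.max (cb i) (cb j))
  else cb i.
End coeffs.
End defs.

From HB Require Import structures.
From mathcomp Require Import all_boot all_order all_algebra.
From mathcomp Require Import all_classical all_reals all_analysis.
From mathcomp Require Import ring lra.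
Import Order.TTheory GRing.Theory Num.Theory.
Local Open Scope ring_scope.
Local Open Scope classical_set_scope.

(* Under P_i the cross moment E[(X - m1)(Y - m2)] is the affine function
   L_i(m1) = c_i + (a_i - m1)(b_i - m2) of m1, so the sublinear expectation is
   max_i L_i, M_X and M_Y are the intervals spanned by the a_i and the b_i, and
   the upper covariance is a finite max-min problem.  For m2 = x between b_i and
   b_j one has (b_j - b_i) q_ij(x) = (b_j - x) L_i(m1) + (x - b_i) L_j(m1) for
   every m1; hence no m1 pushes both L_i and L_j below q_ij(x), which gives the
   lower bound at x = b_i and at x = \tilde\mu_ij.  Conversely, fix x and V
   above every c_i and every q_ij(\tilde\mu_ij).  The sets {m1 | L_i(m1) <= V}
   are intervals, and by the same identity two of them meet as soon as
   q_ij(x) <= V; this holds because between b_i and b_j the quadratic q_ij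
   is either convex, with endpoint values c_i and c_j, or concave and maximal at
   its clamped vertex \tilde\mu_ij.  Pairwise meeting intervals of the line
   have a common point, which is the required m1. *)

Section order_facts.
Context {disp : Order.disp_t} {T : orderType disp}.
Local Open Scope order_scope.

Lemma pairwise_le_common_point (I : finType) (l u : I -> T) (lo hi : T) :
  lo <= hi -> (forall i, l i <= hi) -> (forall j, lo <= u j) ->
  (forall i j, l i <= u j) ->
  exists2 m, lo <= m <= hi & forall i, l i <= m <= u i.
Proof.
move=> lohi lhi lou lu; exists (\big[Order.max/lo]_i l i).
  by rewrite bigmax_ge_id; apply: bigmax_le.
by move=> i; rewrite le_bigmax; apply: bigmax_le.
Qed.

Lemma exists_argmin_argmax {K : nat} (f : 'I_K -> T) :
  (0 < K)%N -> exists lo hi, forall i, f lo <= f i <= f hi.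
Proof.
move=> K0; pose i0 := Ordinal K0.
case: (@arg_minP _ _ _ i0 xpredT f erefl) => lo _ lo_min.
case: (@arg_maxP _ _ _ i0 xpredT f erefl) => hi _ hi_max.
by exists lo, hi => i; apply/andP; split; [exact: lo_min | exact: hi_max].
Qed.

End order_facts.

Lemma bigmaxe_EFin_argmax {R : realDomainType} {K : nat} (f : 'I_K -> R)
    (k : 'I_K) :
  (forall i, f i <= f k) -> (\big[Order.max/-oo]_(i < K) (f i)%:E = (f k)%:E)%E.
Proof.
move=> k_max; apply/eqP; rewrite eq_le le_bigmax andbT.
by apply: bigmax_le => [|i _]; rewrite ?leNye ?lee_fin.
Qed.

Section real_algebra.
Context {R : realFieldType}.

Definition cross_moment (a b c m1 m2 : R) : R := c + (a - m1) * (b - m2).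

Definition clamp (lo hi v : R) : R := Num.min (Num.max v lo) hi.

Lemma clamp_mem (lo hi v : R) : lo <= hi -> lo <= clamp lo hi v <= hi.
Proof.
by move=> lohi; rewrite /clamp le_min ge_min !le_max !lexx lohi !orbT.
Qed.

Lemma clamp_dist_le (lo hi v x : R) : lo <= x <= hi ->
  (clamp lo hi v - v) ^+ 2 <= (x - v) ^+ 2.
Proof.
move=> /andP[lox xhi]; rewrite /clamp !expr2.
case: (lerP v lo) => vlo; first by rewrite min_l ?(le_trans lox xhi) //; nra.
case: (lerP v hi) => vhi; first by rewrite subrr mul0r -expr2 sqr_ge0.
nra.
Qed.

Lemma between_mulr_le0 {u v x : R} :
  Num.min u v <= x <= Num.max u v -> (x - u) * (x - v) <= 0.
Proof. by rewrite ge_min !le_max; case: (lerP u v) => ?; case/andP; nra. Qed.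

Lemma convex_comb_le_max (c1 c2 : R) {t : R} : 0 <= t <= 1 ->
  c1 + t * (c2 - c1) <= Num.max c1 c2.
Proof. by case/andP=> t0 t1; rewrite le_max; case: (lerP c1 c2) => ?; nra. Qed.

Section pair.
Variables ai aj bi bj ci cj : R.

(* [pair_quad], [pair_point] and [pair_value] are q_ij, \tilde\mu_ij and
   q_ij(\tilde\mu_ij) for the coefficients a, b, c of P_i and P_j; they unfold
   to [qfun] and [mutilde]. *)
Definition pair_quad (x : R) : R :=
  ((x - bi) * (x - bj) * (ai - aj) + (x - bi) * (cj - ci)) / (bj - bi) + ci.

Definition pair_vertex : R := (cj - ci) / (2 * (aj - ai)) + (bi + bj) / 2.

Definition pair_point : R :=
  if (ai != aj) && (bi != bj)
  then clamp (Num.min bi bj) (Num.max bi bj) pair_vertex else bi.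

Definition pair_value : R :=
  if (ai != aj) && (bi != bj) then pair_quad pair_point else ci.

Lemma pair_point_mem : Num.min bi bj <= pair_point <= Num.max bi bj.
Proof.
rewrite /pair_point; case: ifP => _; last by rewrite ge_min le_max !lexx.
by apply: clamp_mem; rewrite ge_min le_max lexx.
Qed.

Hypothesis bij : bi != bj.

(* The m-terms cancel: for x between bi and bj, q_ij(x) is a convex
   combination of the two cross moments at (m, x), whatever m. *)
Lemma pair_quad_cross_moment m x : (bj - bi) * pair_quad x =
  (bj - x) * cross_moment ai bi ci m x + (x - bi) * cross_moment aj bj cj m x.
Proof.
by rewrite /pair_quad /cross_moment; field; rewrite subr_eq0 eq_sym.
Qed.

Lemma pair_quad_le_cross_moment m x : Num.min bi bj <= x <= Num.max bi bj ->
  pair_quad x <= Num.max (cross_moment ai bi ci m x) (cross_moment aj bj cj m x).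
Proof.
move=> hx; have comb := pair_quad_cross_moment m x.
set Li := cross_moment _ _ _ _ _ in comb *; set Lj := cross_moment _ _ _ _ _ in comb *.
have hi : 0 <= Num.max Li Lj - Li by rewrite subr_ge0 le_max lexx.
have hj : 0 <= Num.max Li Lj - Lj by rewrite subr_ge0 le_max lexx orbT.
case: (ltrgtP bi bj) hx => [hb|hb|eqb] /andP[xl xr]; last by move: bij; rewrite eqb eqxx.
  have : 0 <= (bj - x) * (Num.max Li Lj - Li) by apply: mulr_ge0; rewrite // subr_ge0.
  have : 0 <= (x - bi) * (Num.max Li Lj - Lj) by apply: mulr_ge0; rewrite // subr_ge0.
  nra.
have : 0 <= (x - bj) * (Num.max Li Lj - Li) by apply: mulr_ge0; rewrite // subr_ge0.
have : 0 <= (bi - x) * (Num.max Li Lj - Lj) by apply: mulr_ge0; rewrite // subr_ge0.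
nra.
Qed.

Lemma pair_quadE x : pair_quad x =
  (ai - aj) / (bj - bi) * ((x - bi) * (x - bj)) + (ci + (x - bi) / (bj - bi) * (cj - ci)).
Proof. by rewrite /pair_quad; field; rewrite subr_eq0 eq_sym. Qed.

Lemma pair_quad_vertexE x y : ai != aj ->
  pair_quad x - pair_quad y =
  (ai - aj) / (bj - bi) * ((x - pair_vertex) ^+ 2 - (y - pair_vertex) ^+ 2).
Proof.
move=> aij; rewrite /pair_quad /pair_vertex; field.
by rewrite !subr_eq0 !(eq_sym _ bi) bij eq_sym aij.
Qed.

Lemma between_ratio {x} : Num.min bi bj <= x <= Num.max bi bj ->
  0 <= (x - bi) / (bj - bi) <= 1.
Proof.
move=> /between_mulr_le0 hx.
case: (ltrgtP bi bj) => [hb|hb|eqb]; last by move: bij; rewrite eqb eqxx.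
  by rewrite divr_ge0 ?ler_pdivrMr ?subr_gt0 //=; nra.
rewrite -mulrNN -invrN divr_ge0 ?ler_pdivrMr ?subr_gt0 ?oppr_gt0 ?subr_lt0 //=; nra.
Qed.

Lemma pair_quad_le_pair_value x : Num.min bi bj <= x <= Num.max bi bj ->
  pair_quad x <= Num.max (Num.max ci cj) pair_value.
Proof.
move=> hx; rewrite le_max; case: (lerP 0 ((ai - aj) / (bj - bi))) => hA.
  apply/orP; left; rewrite pair_quadE.
  have := convex_comb_le_max ci cj (between_ratio hx).
  have := between_mulr_le0 hx; nra.
have aij : ai != aj.
  by apply: contraTneq hA => ->; rewrite subrr mul0r ltxx.
apply/orP; right; rewrite /pair_value /pair_point aij bij /=.
rewrite -subr_ge0 -opprB pair_quad_vertexE // oppr_ge0 nmulr_rle0 // subr_ge0.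
exact: clamp_dist_le.
Qed.

End pair.

Lemma pair_value_le_cross_moment ai aj bi bj ci cj m :
  let mu := pair_point ai aj bi bj ci cj in
  pair_value ai aj bi bj ci cj <=
  Num.max (cross_moment ai bi ci m mu) (cross_moment aj bj cj m mu).
Proof.
rewrite /= {1}/pair_value; case: ifP => [/andP[_ bij]|nondeg].
  exact/pair_quad_le_cross_moment/pair_point_mem.
by rewrite /pair_point nondeg le_max /cross_moment subrr mulr0 addr0 lexx.
Qed.

Lemma pair_quad_sym ai aj bi bj ci cj x : bi != bj ->
  pair_quad ai aj bi bj ci cj x = pair_quad aj ai bj bi cj ci x.
Proof. by move=> bij; rewrite /pair_quad; field; rewrite !subr_eq0 bij eq_sym bij. Qed.

Definition level_point (a b c x V : R) : R := a - (V - c) / (b - x).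

Lemma cross_moment_level a b c x V : b != x ->
  cross_moment a b c (level_point a b c x V) x = V.
Proof. by move=> bx; rewrite /cross_moment /level_point; field; rewrite subr_eq0. Qed.

Lemma cross_moment_le_gt a b c m x V : x < b ->
  (cross_moment a b c m x <= V) = (level_point a b c x V <= m).
Proof.
move=> xb; rewrite /cross_moment /level_point addrC -lerBrDr.
by rewrite -ler_pdivlMr ?subr_gt0 // lerBlDr addrC -lerBlDr.
Qed.

Lemma cross_moment_le_lt a b c m x V : b < x ->
  (cross_moment a b c m x <= V) = (m <= level_point a b c x V).
Proof.
move=> bx; rewrite /cross_moment /level_point addrC -lerBrDr.
by rewrite -ler_ndivrMr ?subr_lt0 // lerBrDr addrC -lerBrDr.
Qed.

End real_algebra.

Lemma pair_quad_le_of_pair_value {R : realFieldType} {K : nat}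
    (a b c : 'I_K -> R) (V x : R) :
  (forall i, c i <= V) ->
  (forall i j : 'I_K, (i <= j)%N ->
     pair_value (a i) (a j) (b i) (b j) (c i) (c j) <= V) ->
  forall j k, b j < x < b k -> pair_quad (a j) (a k) (b j) (b k) (c j) (c k) x <= V.
Proof.
move=> c_le value_le.
suff ordered (j k : 'I_K) : (j <= k)%N -> b j != b k ->
    Num.min (b j) (b k) <= x <= Num.max (b j) (b k) ->
    pair_quad (a j) (a k) (b j) (b k) (c j) (c k) x <= V.
  move=> j k /andP[bjx xbk].
  have bjk : b j != b k by rewrite lt_eqF // (lt_trans bjx xbk).
  have hx : Num.min (b j) (b k) <= x <= Num.max (b j) (b k).
    by rewrite ge_min le_max (ltW bjx) (ltW xbk) orbT.
  case: (leqP j k) => jk; first exact: ordered.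
  rewrite pair_quad_sym //; apply: ordered; first exact: ltnW.
    by rewrite eq_sym.
  by rewrite minC maxC.
move=> jk bjk hx.
apply: le_trans (pair_quad_le_pair_value (a j) (a k) _ _ (c j) (c k) bjk _ hx) _.
by rewrite !ge_max !c_le value_le.
Qed.

Section cross_moment_bound.
Context {R : realFieldType} {K : nat}.
Variables (a b c : 'I_K -> R) (V x lo hi : R).
Hypotheses (lohi : lo <= hi) (c_le : forall i, c i <= V)
  (a_mem : forall i, lo <= a i <= hi).
Hypothesis value_le : forall i j : 'I_K, (i <= j)%N ->
  pair_value (a i) (a j) (b i) (b j) (c i) (c j) <= V.

Let pair_quad_le := pair_quad_le_of_pair_value a b c V x c_le value_le.

Let level i := level_point (a i) (b i) (c i) x V.

Let level_le_hi i : x < b i -> level i <= hi.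
Proof.
move=> xb; rewrite -cross_moment_le_gt // /cross_moment.
have /andP[_ ahi] := a_mem i; have := c_le i; nra.
Qed.

Let lo_le_level i : b i < x -> lo <= level i.
Proof.
move=> bx; rewrite -cross_moment_le_lt // /cross_moment.
have /andP[loa _] := a_mem i; have := c_le i; nra.
Qed.

Let level_le_level j k : b j < x -> x < b k -> level k <= level j.
Proof.
(* At m = level k the k-th moment is V, so the convex combination bounds the j-th. *)
move=> bjx xbk; rewrite -cross_moment_le_lt //.
have Lk := cross_moment_level (a k) (b k) (c k) x V (negbT (gt_eqF xbk)).
have bjk : b j != b k by rewrite lt_eqF // (lt_trans bjx xbk).
have := pair_quad_cross_moment (a j) (a k) (b j) (b k) (c j) (c k) bjk (level k) x.
rewrite /level Lk; have := pair_quad_le j k (introT andP (conj bjx xbk)).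
nra.
Qed.

Lemma exists_cross_moment_le :
  exists2 m, lo <= m <= hi & forall i, cross_moment (a i) (b i) (c i) m x <= V.
Proof.
(* [lo <= m <= hi /\ cross_moment i m x <= V] iff [l i <= m <= u i]. *)
pose l i := if x < b i then level i else lo.
pose u i := if b i < x then level i else hi.
have [m mlohi lmu] : exists2 m, lo <= m <= hi & forall i, l i <= m <= u i.
  apply: pairwise_le_common_point => // [i|j|i j]; rewrite /l /u.
  - by case: ifP => // /level_le_hi.
  - by case: ifP => // /lo_le_level.
  case: ifP => xbi; case: ifP => bjx //; first exact: level_le_level.
    exact: level_le_hi.
  exact: lo_le_level.
exists m => // i; have /andP[lm mu] := lmu i; move: lm mu; rewrite /l /u.
case: (ltrgtP x (b i)) => [xb|bx|<-] lm mu.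
- by rewrite cross_moment_le_gt.
- by rewrite cross_moment_le_lt.
- by rewrite /cross_moment subrr mulr0 addr0.
Qed.

End cross_moment_bound.

Section sup_inf.
Context {R : realType} {K : nat}.
Variables (a b c : 'I_K -> R) (loa hia lob hib : R).
Hypotheses (K0 : (0 < K)%N) (a_mem : forall i, loa <= a i <= hia)
  (b_mem : forall i, lob <= b i <= hib).
Local Open Scope ereal_scope.

Let F m1 m2 := \big[Order.max/-oo]_(i < K) (cross_moment (a i) (b i) (c i) m1 m2)%:E.
Let inner (m2 : R) := ereal_inf [set F m1 m2 | m1 in [set r : R | (loa <= r <= hia)%R]].
Let value i j := pair_value (a i) (a j) (b i) (b j) (c i) (c j).
Let point i j := pair_point (a i) (a j) (b i) (b j) (c i) (c j).

Let cov_le_inner i : (c i)%:E <= inner (b i).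
Proof.
apply: le_ereal_inf_tmp => _ [m1 _ <-]; apply: le_trans (le_bigmax _ _ i).
by rewrite lee_fin /cross_moment subrr mulr0 addr0.
Qed.

Let value_le_inner i j : (value i j)%:E <= inner (point i j).
Proof.
apply: le_ereal_inf_tmp => _ [m1 _ <-].
have /= := pair_value_le_cross_moment (a i) (a j) (b i) (b j) (c i) (c j) m1.
by rewrite le_max => /orP[] ?; [apply: le_trans (le_bigmax _ _ i) |
  apply: le_trans (le_bigmax _ _ j)]; rewrite lee_fin.
Qed.

Let inner_le V m2 : (forall i, (c i <= V)%R) ->
  (forall i j : 'I_K, (i <= j)%N -> (value i j <= V)%R) -> inner m2 <= V%:E.
Proof.
move=> c_le value_le.
have lohi : (loa <= hia)%R by have /andP[] := a_mem (Ordinal K0); exact: le_trans.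
have [m mmem le_V] := exists_cross_moment_le a b c V m2 loa hia lohi c_le a_mem value_le.
apply: ge_ereal_inf; exists (F m m2); first by exists m.
by apply: bigmax_le => [|i _]; rewrite ?leNye ?lee_fin.
Qed.

Lemma sup_inf_max_cross_moment :
  ereal_sup [set inner m2 | m2 in [set r : R | (lob <= r <= hib)%R]] =
  Order.max (\big[Order.max/-oo]_(i < K) (c i)%:E)
            (\big[Order.max/-oo]_(i < K) \big[Order.max/-oo]_(j < K | (i <= j)%N)
                (value i j)%:E).
Proof.
set V := Order.max _ _.
have c_le i : (c i)%:E <= V by rewrite le_max; apply/orP; left; exact: le_bigmax.
have value_le (i j : 'I_K) : (i <= j)%N -> (value i j)%:E <= V.
  move=> ij; rewrite le_max; apply/orP; right.
  by apply: le_trans (le_bigmax _ _ i); exact: le_bigmax_cond.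
have V_fin : V \is a fin_num.
  rewrite fin_real // (lt_le_trans _ (c_le (Ordinal K0))) ?ltNyr //=.
  by rewrite gt_max !bigmax_lt // => i _; rewrite ?bigmax_lt // => *; exact: ltry.
apply/eqP; rewrite eq_le; apply/andP; split.
  apply: ge_ereal_sup => _ [m2 _ <-]; rewrite -(fineK V_fin).
  by apply: inner_le => [i|i j ij]; rewrite -lee_fin fineK ?c_le ?value_le.
rewrite ge_max; apply/andP; split; apply: bigmax_le => [|i _]; rewrite ?leNye //.
  apply: le_ereal_sup_tmp; exists (inner (b i)); last exact: cov_le_inner.
  by exists (b i); first exact: b_mem.
apply: bigmax_le => [|j _]; rewrite ?leNye //; apply: le_ereal_sup_tmp.
exists (inner (point i j)); last exact: value_le_inner.
exists (point i j) => //=.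
have /andP[lo hi] := pair_point_mem (a i) (a j) (b i) (b j) (c i) (c j).
have /andP[lobi bihb] := b_mem i; have /andP[lobj bjhb] := b_mem j.
by rewrite (le_trans _ lo) ?(le_trans hi) // ?le_min ?ge_max ?lobi ?bihb.
Qed.

End sup_inf.

Section expectation.
Context {d : measure_display} {T : measurableType d} {R : realType}.
Variable Q : probability T R.
Local Open Scope ereal_scope.

Lemma Lfun2_of_expectation_sqr (Z : T -> R) : measurable_fun setT Z ->
  'E_Q[fun w => (Z w ^+ 2)%R] < +oo -> Z \in Lfun Q 2%:E.
Proof.
move=> mZ Z2; rewrite inE; apply/andP; split; first by rewrite inE.
rewrite inE /= /finite_norm unlock /Lnorm; apply: poweR_lty.
move: Z2; rewrite unlock.
under eq_integral => w _.
  rewrite /= powR_mulrn ?normr_ge0 // real_normK ?num_real //.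
  over.
done.
Qed.

Lemma Lfun2_Lfun1 {Z : T -> R} : Z \in Lfun Q 2%:E -> Z \in Lfun Q 1.
Proof. exact/Lfun_subset12/fin_num_measure. Qed.

Lemma covariance_fineK (X Y : T -> R) : X \in Lfun Q 2%:E -> Y \in Lfun Q 2%:E ->
  covariance Q X Y = (fine (covariance Q X Y))%:E.
Proof.
move=> X2 Y2; have XY1 := Lfun2_mul_Lfun1 X2 Y2.
by rewrite fineK // covariance_fin_num //; apply: Lfun2_Lfun1.
Qed.

Lemma expectationN (Z : T -> R) : Z \in Lfun Q 1 ->
  'E_Q[fun w => (- Z w)%R] = - 'E_Q[Z].
Proof.
move=> Z1; have -> : (fun w => (- Z w)%R) = ((-1) \o* Z)%R.
  by apply/funext => w; rewrite /GRing.mulr_fun mulrN1.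
by rewrite expectationZl // mulN1e.
Qed.

Lemma expectation_cross_moment (X Y : T -> R) (m1 m2 : R) :
  X \in Lfun Q 2%:E -> Y \in Lfun Q 2%:E ->
  'E_Q[fun w => ((X w - m1) * (Y w - m2))%R] =
  (cross_moment (fine 'E_Q[X]) (fine 'E_Q[Y]) (fine (covariance Q X Y)) m1 m2)%:E.
Proof.
move=> X2 Y2; have X1 := Lfun2_Lfun1 X2; have Y1 := Lfun2_Lfun1 Y2.
have XY1 := Lfun2_mul_Lfun1 X2 Y2.
have -> : (fun w => ((X w - m1) * (Y w - m2))%R) =
    ((X * Y) \- (m2 \o* X) \- (m1 \o* Y) \+ cst (m1 * m2))%R.
  apply/funext => w; rewrite /= /GRing.mulr_fun /=.
  by have -> : (X * Y)%R w = (X w * Y w)%R by []; ring.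
rewrite expectationD ?rpredB ?Lfun_cst ?Lfun_scale //.
rewrite !expectationB ?rpredB ?Lfun_scale //.
rewrite (_ : 'E_Q[cst (m1 * m2)%R] = (m1 * m2)%:E); last exact: expectation_cst.
rewrite !expectationZl // covarianceE //.
rewrite -[in LHS](fineK (expectation_fin_num XY1)).
rewrite -[in LHS](fineK (expectation_fin_num X1)).
rewrite -[in LHS](fineK (expectation_fin_num Y1)).
rewrite -!EFinM -!EFinB -EFinD /cross_moment.
rewrite fineB ?fineM ?fin_numM ?expectation_fin_num //.
by congr EFin; ring.
Qed.

End expectation.

Section sublinear_expectation.
Context {d : measure_display} {T : measurableType d} {R : realType} {K : nat}.
Variable P : 'I_K -> probability T R.
Local Open Scope ereal_scope.

Lemma Ehat_ge0 (Z : T -> R) : (0 < K)%N -> (forall w, (0 <= Z w)%R) -> 0 <= Ehat P Z.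
Proof.
by move=> K0 Z0; apply: le_trans (le_bigmax _ _ (Ordinal K0)); exact: expectation_ge0.
Qed.

Lemma Lfun2_of_Ehat_sqr (Z : T -> R) : measurable_fun setT Z ->
  Ehat P (fun w => (Z w ^+ 2)%R) < +oo -> forall i, Z \in Lfun (P i) 2%:E.
Proof.
move=> mZ Z2 i; apply: Lfun2_of_expectation_sqr => //.
exact: le_lt_trans (le_bigmax _ _ i) Z2.
Qed.

Lemma Mset_itv (W : T -> R) (lo hi : 'I_K) : (forall i, W \in Lfun (P i) 1) ->
  (forall i, (ca P W lo <= ca P W i <= ca P W hi)%R) ->
  Mset P W = [set r : R | (ca P W lo <= r <= ca P W hi)%R].
Proof.
move=> W1 W_mem; rewrite /Mset.
have EW i : 'E_(P i)[W] = (ca P W i)%:E by rewrite fineK ?expectation_fin_num.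
have -> : Ehat P W = (ca P W hi)%:E.
  rewrite /Ehat (eq_bigr (fun i => (ca P W i)%:E)) => [|i _]; last exact: EW.
  by apply: bigmaxe_EFin_argmax => i; have /andP[] := W_mem i.
have -> : Ehat P (fun w => - W w)%R = (- ca P W lo)%:E.
  rewrite /Ehat (eq_bigr (fun i => (- ca P W i)%:E)) => [|i _]; last first.
    by rewrite expectationN // EW.
  by apply: bigmaxe_EFin_argmax => i; rewrite lerN2; have /andP[] := W_mem i.
by apply/seteqP; split => r /=; rewrite opprK !lee_fin.
Qed.

Lemma Ehat_cross_moment (X Y : T -> R) (m1 m2 : R) :
  (forall i, X \in Lfun (P i) 2%:E) -> (forall i, Y \in Lfun (P i) 2%:E) ->
  Ehat P (fun w => ((X w - m1) * (Y w - m2))%R) =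
  \big[Order.max/-oo]_(i < K) (cross_moment (ca P X i) (cb P Y i) (cc P X Y i) m1 m2)%:E.
Proof. by move=> X2 Y2; apply: eq_bigr => i _; exact: expectation_cross_moment. Qed.

End sublinear_expectation.

Theorem theorem4p4 (d : measure_display) (T : measurableType d) (R : realType)
  (K : nat) (P : 'I_K -> probability T R) (X Y : T -> R) :
  (0 < K)%N ->
  measurable_fun setT X -> measurable_fun setT Y ->
  (Ehat P (fun w => (X w ^+ 2)%R) + Ehat P (fun w => (Y w ^+ 2)%R) < +oo)%E ->
  upper_cov P X Y =
  Order.max (\big[Order.max/-oo%E]_(i < K) (covariance (P i) X Y))
            (\big[Order.max/-oo%E]_(i < K) \big[Order.max/-oo%E]_(j < K | (i <= j)%N)
                ((qfun P X Y i j (mutilde P X Y i j))%:E)).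
Proof.
move=> K0 mX mY sq_fin.
have sqr_Ehat_ge0 (Z : T -> R) : (0 <= Ehat P (fun w => Z w ^+ 2)%R)%E.
  by apply: Ehat_ge0 => // w; exact: sqr_ge0.
have X2 := Lfun2_of_Ehat_sqr P X mX (le_lt_trans (leeDl _ (sqr_Ehat_ge0 Y)) sq_fin).
have Y2 := Lfun2_of_Ehat_sqr P Y mY (le_lt_trans (leeDr _ (sqr_Ehat_ge0 X)) sq_fin).
have [loX [hiX X_mem]] := exists_argmin_argmax (ca P X) K0.
have [loY [hiY Y_mem]] := exists_argmin_argmax (cb P Y) K0.
rewrite (eq_bigr (fun i => (cc P X Y i)%:E)) => [|i _]; last exact: covariance_fineK.
rewrite /upper_cov (Mset_itv P X loX hiX (fun i => Lfun2_Lfun1 _ (X2 i)) X_mem).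
rewrite (Mset_itv P Y loY hiY (fun i => Lfun2_Lfun1 _ (Y2 i)) Y_mem).
under eq_imagel => m2 _ do under eq_imagel => m1 _ do rewrite Ehat_cross_moment //.
exact: sup_inf_max_cross_moment.
Qed.
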